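(* Let $k$ be a field, $d>0$ an integer that is not a multiple of the characteristic of $k$, and $a_1,\ldots,a_n\in k$ all nonzero. Then the diagonal form $a_1x_1^d+\cdots+a_nx_n^d\in k[x_1,\ldots,x_n]$ has strength at least $n/2$.
   Context: For a homogeneous polynomial $f$ of degree $d>0$ over $k$, $\operatorname{str}(f)$ is the minimal $s\ge 0$ such that $f=g_1h_1+\cdots+g_sh_s$ with $g_i,h_i$ homogeneous polynomials over $k$ of degrees $<d$ ($\infty$ if no such expression exists). *)

From HB Require Import structures.
From mathcomp Require Import all_boot all_order all_algebra.
From mathcomp Require Import mpoly.
Set Implicit Arguments. Unset Strict Implicit. Unset Printing Implicit Defensive.
Import GRing.Theory.
Local Open Scope ring_scope.

(* p is a homogeneous polynomial of (total) degree e (the zero polynomial is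
   homogeneous of every degree, as usual). *)
Definition is_homog_deg (n : nat) (k : ringType) (e : nat) (p : {mpoly k[n]}) : bool :=
  p \is ishomog1 e (@mdeg n).

(* f = g_1 h_1 + ... + g_s h_s with all g_i, h_i homogeneous of degree < d.
   str(f) is the minimal such s (infinity if none exists); hence
   "str(f) >= r" means: every such decomposition has s >= r. *)
Definition str_decomp (n : nat) (k : ringType) (d : nat) (f : {mpoly k[n]}) (s : nat) : Prop :=
  exists (g h : 'I_s -> {mpoly k[n]}),
    (forall i, exists e, (e < d)%N /\ is_homog_deg e (g i)) /\
    (forall i, exists e, (e < d)%N /\ is_homog_deg e (h i)) /\
    f = \sum_(i < s) g i * h i.

Definition diag_form (n : nat) (k : ringType) (d : nat) (a : 'I_n -> k) : {mpoly k[n]} :=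
  \sum_(i < n) a i *: 'X_i ^+ d.

(* Suppose f = g_1 h_1 + ... + g_s h_s. Taking the degree-d homogeneous part we may
   keep only the products with deg g_i + deg h_i = d, so every g_i, h_i has positive
   degree, and by the Leibniz rule each partial derivative d a_l x_l^(d-1) of f lies in
   the ideal I generated by these r <= 2s forms, with degree control. As d is a unit in k,
   I contains x_l^(d-1) for every l, so the quotient k[x]/I has bounded dimension in
   degrees <= D. On the other hand each generator of positive degree raises the growth
   of k[x]_(<= D) over the quotient by at most one partial summation, whence
   dim k[x]_(<= D) <= C (D+1)^r. Since this dimension grows like D^n, n <= r <= 2s: an
   elementary instance of Krull's height theorem, phrased with Hilbert functions. *)

From HB Require Import structures.
From mathcomp Require Import all_boot all_order all_algebra.
From mathcomp Require Import mpoly zify.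
Import GRing.Theory.
Set Implicit Arguments. Unset Strict Implicit. Unset Printing Implicit Defensive.

Definition psum (g : nat -> nat) (x : nat) : nat := \sum_(0 <= D < x.+1) g D.

Lemma psumS g x : psum g x.+1 = psum g x + g x.+1.
Proof. by rewrite /psum big_nat_recr. Qed.

Lemma leq_psum_term g x : g x <= psum g x.
Proof. by rewrite /psum big_nat_recr //= leq_addl. Qed.

Lemma leq_psumr g y x : y <= x -> psum g y <= psum g x.
Proof. by move=> le_yx; rewrite /psum [X in _ <= X](@big_cat_nat _ _ _ y.+1) //= leq_addr. Qed.

Lemma leq_psum f g x : (forall D, D <= x -> f D <= g D) -> psum f x <= psum g x.
Proof.
move=> le_fg; rewrite /psum !big_seq; apply: leq_sum => D.
by rewrite mem_index_iota => /andP[_ ltDx]; apply: le_fg.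
Qed.

Lemma psum_leq_const g c x : (forall D, D <= x -> g D <= c) -> psum g x <= x.+1 * c.
Proof.
move=> le_gc; rewrite -[x.+1]subn0 -sum_nat_const_nat /psum !big_seq.
by apply: leq_sum => D; rewrite mem_index_iota => /andP[_ ltDx]; apply: le_gc.
Qed.

Lemma leq_expn2r m1 m2 e : m1 <= m2 -> m1 ^ e <= m2 ^ e.
Proof. by move=> le_m12; elim: e => // e IHe; rewrite !expnS leq_mul. Qed.

Lemma leq_iter_psum j f g x : (forall D, D <= x -> f D <= g D) ->
  iter j psum f x <= iter j psum g x.
Proof.
elim: j x => [|j IHj] x le_fg /=; first exact: le_fg.
apply: leq_psum => D le_Dx; apply: IHj => D' le_D'D.
by apply: le_fg; apply: leq_trans le_D'D le_Dx.
Qed.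

Lemma iter_psum_leq j f B x : (forall D, D <= x -> f D <= B) ->
  iter j psum f x <= B * x.+1 ^ j.
Proof.
elim: j x => [|j IHj] x le_fB /=; first by rewrite muln1; apply: le_fB.
rewrite expnS mulnCA; apply: psum_leq_const => D le_Dx.
apply: leq_trans (IHj D _) _; first by move=> D' le_D'D; apply/le_fB/(leq_trans le_D'D).
by rewrite leq_mul2l leq_expn2r ?orbT.
Qed.

Lemma leq_psum_rec f g e N : 0 < e ->
  (forall D, D <= N -> e <= D -> f D <= g D + f (D - e)) ->
  (forall D, D <= N -> D < e -> f D <= g D) ->
  forall x, x <= N -> f x <= psum g x.
Proof.
move=> e_gt0 f_rec f_small; elim/ltn_ind=> x IHx le_xN.
have [le_ex|lt_xe] := leqP e x; last exact: leq_trans (f_small x le_xN lt_xe) (leq_psum_term g x).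
case: x le_ex le_xN IHx => [|x] le_ex le_xN IHx; first by move: e_gt0 le_ex; lia.
rewrite psumS addnC; apply: leq_trans (f_rec _ le_xN le_ex) _; rewrite leq_add2l.
have lt_x1e : x.+1 - e < x.+1 by move: e_gt0 le_ex; lia.
apply: leq_trans (IHx _ lt_x1e (leq_trans (leq_subr _ _) le_xN)) _.
by apply: leq_psumr; move: e_gt0 le_ex; lia.
Qed.

Lemma exists_pow_gt B r n : r < n -> exists K, B * (n * K).+1 ^ r < K ^ n.
Proof.
case: n => // n; rewrite ltnS => le_rn; pose K := (B * n.+2 ^ n).+1; exists K.
rewrite expnS; apply: (@leq_trans (B * n.+2 ^ n * K ^ n).+1).
  rewrite ltnS -mulnA -expnMn leq_mul2l; apply/orP; right.
  apply: leq_trans (leq_pexp2l _ le_rn) (leq_expn2r _ _) => //.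
  by rewrite [n.+2 * K]mulSn addnC -addn1 leq_add2l.
by rewrite {2}/K mulSn addnC -addn1 leq_add2l expn_gt0.
Qed.

Lemma dimv_add_limg (K : fieldType) (vT : vectType K) (A B C : {vspace vT}) (f : 'End(vT)) :
  (C <= B)%VS -> (f @: C <= A)%VS -> \dim (A + f @: B) + \dim C <= \dim A + \dim B.
Proof.
move=> sCB sfCA.
have sfC : (f @: C <= A :&: f @: B)%VS by rewrite subv_cap sfCA limgS.
have sker : (C :&: lker f <= B :&: lker f)%VS by rewrite capvS.
have := dimv_sum_cap A (f @: B); have := limg_ker_dim f B; have := limg_ker_dim f C.
by move: (dimvS sfC) (dimvS sker); lia.
Qed.

Lemma msizeMX_le (R : ringType) n (c : {mpoly R[n]}) m :
  msize (c * 'X_[m]) <= msize c + mdeg m.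
Proof.
rewrite [msize (_ * _)]msizeE; apply/bigmax_leqP_seq => m' + _.
rewrite (perm_mem (msuppMX c m)) => /mapP[m'' /msize_mdeg_lt lt_m''c ->].
by rewrite mdegD addnC -addSn leq_add2r.
Qed.

Local Open Scope ring_scope.

(* [ps] lists generators [p] paired with a bound [e] on their degree; [f] is a
   combination of them with every term [c * p] of degree at most [a]. *)
Definition in_ideal_deg (R : ringType) n (ps : seq ({mpoly R[n]} * nat)) (a : nat)
    (f : {mpoly R[n]}) : Prop :=
  exists cs : seq ({mpoly R[n]} * ({mpoly R[n]} * nat)),
    f = \sum_(ce <- cs) ce.1 * ce.2.1 /\
    {in cs, forall ce, ce.2 \in ps /\ (msize ce.1 + ce.2.2 <= a.+1)%N}.

Definition deg_bounded (R : ringType) n (ps : seq ({mpoly R[n]} * nat)) : bool :=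
  all (fun pe => msize pe.1 <= pe.2.+1)%N ps.

Section TruncatedPolynomials.
Variables (k : fieldType) (n N : nat).
Local Notation M := 'X_{1..n < N.+1}.
Local Notation V := 'rV[k]_#|{: M}|.

Definition coefv (q : {mpoly k[n]}) : V := \row_i q@_(bmnm (enum_val i)).

Definition polyv (v : V) : {mpoly k[n]} := \sum_(m : M) v 0 (enum_rank m) *: 'X_[bmnm m].

Lemma coefv_is_linear : linear coefv.
Proof. by move=> c p q; apply/rowP=> i; rewrite !mxE mcoeffD mcoeffZ. Qed.
HB.instance Definition _ := GRing.isLinear.Build k {mpoly k[n]} V _ coefv coefv_is_linear.

Lemma polyv_is_linear : linear polyv.
Proof.
move=> c u v; rewrite /polyv scaler_sumr -big_split /=; apply: eq_bigr => m _.
by rewrite !mxE scalerDl scalerA.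
Qed.
HB.instance Definition _ := GRing.isLinear.Build k V {mpoly k[n]} _ polyv polyv_is_linear.

Lemma coefvK q : (msize q <= N.+1)%N -> polyv (coefv q) = q.
Proof.
by move=> le_qN; rewrite [RHS](mpolywE le_qN); apply: eq_bigr => m _; rewrite mxE enum_rankK.
Qed.

Lemma polyvK : cancel polyv coefv.
Proof.
move=> v; apply/rowP=> i; rewrite mxE raddf_sum /= (bigD1 (enum_val i)) //= big1 => [|m ne_mi].
  by rewrite mcoeffZ mcoeffX eqxx mulr1 addr0 enum_valK.
by rewrite mcoeffZ mcoeffX -bmeqP (negbTE ne_mi) mulr0.
Qed.

Definition mul_trunc (p : {mpoly k[n]}) (v : V) : V := coefv (p * polyv v).

Lemma mul_trunc_is_linear p : linear (mul_trunc p).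
Proof. by move=> c u v; rewrite /mul_trunc linearP /= mulrDr -scalerAr linearP. Qed.
HB.instance Definition _ p :=
  GRing.isLinear.Build k V V _ (mul_trunc p) (mul_trunc_is_linear p).

Definition mulv p : 'End(V) := linfun (mul_trunc p).

Lemma mulv_coefv p q : (msize q <= N.+1)%N -> mulv p (coefv q) = coefv (p * q).
Proof. by move=> le_qN; rewrite lfunE /= /mul_trunc coefvK. Qed.

Definition mulX_gens p e D : seq V :=
  [seq coefv (p * 'X_[bmnm m]) | m <- enum [pred m : M | mdeg (bmnm m) + e <= D]%N].

Definition deg_space D : {vspace V} := <<mulX_gens 1 0 D>>.

Definition ideal_space (ps : seq ({mpoly k[n]} * nat)) D : {vspace V} :=
  <<flatten [seq mulX_gens pe.1 pe.2 D | pe <- ps]>>.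

Lemma coefv_mulX_gens p e c D : (D <= N)%N -> (msize c + e <= D.+1)%N ->
  coefv (c * p) \in <<mulX_gens p e D>>%VS.
Proof.
move=> le_DN le_cD; have le_cN : (msize c <= N.+1)%N by lia.
rewrite (mpolywE le_cN) mulr_suml linear_sum /=; apply: rpred_sum => m _.
rewrite -scalerAl linearZ /=; have [le_mD|lt_Dm] := leqP (mdeg (bmnm m) + e) D.
  by apply/rpredZ/memv_span/mapP; exists m; rewrite 1?mulrC // mem_enum.
have : bmnm m \notin msupp c by apply: msize_mdeg_ge; lia.
by rewrite mcoeff_msupp negbK => /eqP ->; rewrite scale0r rpred0.
Qed.

Lemma coefv_deg_space q D : (D <= N)%N -> (msize q <= D.+1)%N -> coefv q \in deg_space D.
Proof. by move=> le_DN le_qD; rewrite -[q]mulr1; apply: coefv_mulX_gens; rewrite ?addn0. Qed.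

Lemma mulX_gens_sub_ideal ps p e D :
  (p, e) \in ps -> (<<mulX_gens p e D>> <= ideal_space ps D)%VS.
Proof.
by move=> ps_pe; apply/span_subvP => v v_gen; apply/memv_span/flatten_mapP; exists (p, e).
Qed.

Lemma coefv_ideal_space ps p e c D : (p, e) \in ps -> (D <= N)%N ->
  (msize c + e <= D.+1)%N -> coefv (c * p) \in ideal_space ps D.
Proof.
move=> ps_pe le_DN le_cD.
exact: subvP (mulX_gens_sub_ideal D ps_pe) _ (coefv_mulX_gens _ le_DN le_cD).
Qed.

Lemma ideal_space_sub ps D :
  deg_bounded ps -> (D <= N)%N -> (ideal_space ps D <= deg_space D)%VS.
Proof.
move=> /allP ps_deg le_DN; apply/span_subvP => v /flatten_mapP[[p e] /ps_deg /= le_pe /mapP[m]].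
rewrite mem_enum inE /= => le_mD ->; apply: coefv_deg_space => //.
by apply: leq_trans (msizeMX_le _ _) _; lia.
Qed.

Lemma ideal_space_nil D : ideal_space [::] D = 0%VS.
Proof. by rewrite /ideal_space span_nil. Qed.

Lemma ideal_space_cons p e ps D :
  ideal_space ((p, e) :: ps) D = (<<mulX_gens p e D>> + ideal_space ps D)%VS.
Proof. by rewrite /ideal_space /= span_cat. Qed.

Lemma span_mulX_gens p e D :
  (e <= D)%N -> <<mulX_gens p e D>>%VS = (mulv p @: deg_space (D - e))%VS.
Proof.
move=> le_eD; rewrite limg_span -map_comp /mulX_gens.
have -> : enum [pred m : M | mdeg (bmnm m) + e <= D]%N =
          enum [pred m : M | mdeg (bmnm m) + 0 <= D - e]%N.
  by apply: eq_enum => m; rewrite !inE; lia.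
by congr <<_>>%VS; apply: eq_map => m /=; rewrite mul1r mulv_coefv // msizeX bmdeg.
Qed.

Lemma mulv_ideal_space ps p e D : deg_bounded ps -> (msize p <= e.+1)%N -> (e <= D)%N ->
  (D <= N)%N -> (mulv p @: ideal_space ps (D - e) <= ideal_space ps D)%VS.
Proof.
move=> /allP ps_deg le_pe le_eD le_DN; rewrite limg_span; apply/span_subvP => v /mapP[w].
move=> /flatten_mapP[[p' e'] ps_pe' /mapP[m]]; rewrite mem_enum inE /= => le_mD -> ->.
have /= le_pe' := ps_deg _ ps_pe'.
rewrite mulv_coefv; last by apply: leq_trans (msizeMX_le _ _) _; lia.
rewrite mulrCA mulrC; apply: coefv_ideal_space ps_pe' le_DN _.
by apply: leq_trans (leq_add (msizeMX_le _ _) (leqnn _)) _; lia.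
Qed.

Definition quot_dim ps D := (\dim (deg_space D) - \dim (ideal_space ps D))%N.

(* Multiplication by [p] maps [deg_space (D - e)] onto the new generators and
   [ideal_space ps (D - e)] into the old ideal. *)
Lemma quot_dim_cons p e ps D : deg_bounded ((p, e) :: ps) -> (e <= D)%N -> (D <= N)%N ->
  (quot_dim ps D <= quot_dim ((p, e) :: ps) D + quot_dim ps (D - e))%N.
Proof.
move=> ps_deg' le_eD le_DN; have /andP[/= le_pe ps_deg] := ps_deg'.
have le_DeN : (D - e <= N)%N by lia.
have := dimv_add_limg (ideal_space_sub ps_deg le_DeN)
                      (mulv_ideal_space ps_deg le_pe le_eD le_DN).
rewrite -span_mulX_gens // addvC -ideal_space_cons /quot_dim.
by move: (dimvS (ideal_space_sub ps_deg' le_DN)) (dimvS (ideal_space_sub ps_deg le_DeN)); lia.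
Qed.

Lemma quot_dim_cons_small p e ps D : (D < e)%N -> quot_dim ((p, e) :: ps) D = quot_dim ps D.
Proof.
move=> lt_De; rewrite /quot_dim ideal_space_cons /mulX_gens.
have -> : enum [pred m : M | mdeg (bmnm m) + e <= D]%N = enum pred0.
  by apply: eq_enum => m; rewrite !inE; lia.
by rewrite enum0 span_nil add0v.
Qed.

Lemma dim_deg_space_leq_iter_psum ps x : all (fun pe => 0 < pe.2)%N ps -> deg_bounded ps ->
  (x <= N)%N -> (\dim (deg_space x) <= iter (size ps) psum (quot_dim ps) x)%N.
Proof.
elim: ps x => [|[p e] ps IHps] x.
  by move=> _ _ _; rewrite /= /quot_dim ideal_space_nil dimv0 subn0.
move=> /andP[e_gt0 ps_pos] ps_deg' le_xN; have /andP[_ ps_deg] := ps_deg'.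
apply: leq_trans (IHps x ps_pos ps_deg le_xN) _; rewrite iterSr.
apply: leq_iter_psum => D le_Dx; apply: (leq_psum_rec (N := N) e_gt0).
- by move=> D' le_D'N le_eD'; apply: quot_dim_cons.
- by move=> D' _ lt_D'e; rewrite quot_dim_cons_small.
- exact: leq_trans le_Dx le_xN.
Qed.

Lemma dim_deg_space_top : \dim (deg_space N) = #|{: M}|.
Proof.
have -> : deg_space N = fullv.
  apply/eqP; rewrite eqEsubv subvf; apply/subvP => v _.
  rewrite -(polyvK v) linear_sum; apply: rpred_sum => m _; rewrite linearZ.
  by apply/rpredZ/memv_span/mapP; exists m; rewrite ?mul1r // mem_enum inE addn0 -ltnS bmdeg.
by rewrite dimvf /dim /= mul1n.
Qed.

Lemma coefv_in_ideal_mulX ps a f D m : in_ideal_deg ps a f -> (D <= N)%N ->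
  (a + mdeg m <= D)%N -> coefv (f * 'X_[m]) \in ideal_space ps D.
Proof.
move=> [cs [-> cs_ok]] le_DN le_amD; rewrite mulr_suml linear_sum big_seq.
apply: rpred_sum => -[c [p e]] /cs_ok[/= ps_pe le_ce]; rewrite mulrAC.
apply: coefv_ideal_space ps_pe le_DN _.
by apply: leq_trans (leq_add (msizeMX_le _ _) (leqnn _)) _; lia.
Qed.

Lemma coefvX_in_ideal ps a D m i : (forall l, in_ideal_deg ps a ('X_l ^+ a)) ->
  (D <= N)%N -> (mdeg m <= D)%N -> (a <= m i)%N -> coefv 'X_[m] \in ideal_space ps D.
Proof.
move=> ideal_X le_DN le_mD le_ami.
have def_m : m = (U_(i) *+ a + (m - U_(i) *+ a))%MM.
  by apply/mnmP => j; rewrite mnmDE mnmBE mulmnE mnm1E; case: eqVneq => [<-|]; lia.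
rewrite def_m mpolyXD -mpolyXn; apply: coefv_in_ideal_mulX (ideal_X i) le_DN _.
by move: le_mD; rewrite {1}def_m mdegD mdegMn mdeg1 mul1n.
Qed.

Lemma card_small_monomials a :
  (#|[pred m : M | [forall l, (bmnm m l < a)%N]]| <= a.+1 ^ n)%N.
Proof.
have -> : (a.+1 ^ n = #|{ffun 'I_n -> 'I_a.+1}|)%N by rewrite card_ffun !card_ord.
apply: (@leq_card_in _ _ (fun m : M => [ffun l => inord (bmnm m l) : 'I_a.+1])).
move=> m1 m2 /forallP small1 /forallP small2 /ffunP eq_m12; apply/val_inj/mnmP => l.
have := eq_m12 l; rewrite !ffunE => /(congr1 val).
by rewrite /= !inordK ?ltnS ?(ltnW (small1 l)) ?(ltnW (small2 l)).
Qed.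

Lemma quot_dim_leq ps a D : (forall l, in_ideal_deg ps a ('X_l ^+ a)) -> (D <= N)%N ->
  (quot_dim ps D <= a.+1 ^ n)%N.
Proof.
move=> ideal_X le_DN; set small := [pred m : M | [forall l, (bmnm m l < a)%N]].
have sub : (deg_space D <=
             ideal_space ps D + <<[seq coefv 'X_[bmnm m] | m <- enum small]>>)%VS.
  apply/span_subvP => v /mapP[m]; rewrite mem_enum inE mul1r addn0 => le_mD ->.
  have [small_m|/forallPn[l]] := boolP (m \in small).
    by apply/(subvP (addvSr _ _))/memv_span/mapP; exists m; rewrite ?mem_enum.
  rewrite -leqNgt => le_aml.
  exact/(subvP (addvSl _ _))/(coefvX_in_ideal ideal_X le_DN le_mD le_aml).
rewrite /quot_dim leq_subLR; apply: leq_trans (dimvS sub) _.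
apply: leq_trans (dimv_add_leqif _ _).1 _; rewrite leq_add2l.
by apply: leq_trans (dim_span _) _; rewrite size_map -cardE card_small_monomials.
Qed.
End TruncatedPolynomials.

Lemma card_bmultinom_ge n K : (K ^ n <= #|{: 'X_{1..n < (n * K).+1}}|)%N.
Proof.
have mdeg_lt (f : {ffun 'I_n -> 'I_K}) : (mdeg [multinom (f i : nat) | i < n] < (n * K).+1)%N.
  have -> : (n * K = \sum_(i < n) K)%N by rewrite sum_nat_const card_ord.
  by rewrite ltnS mdegE; apply: leq_sum => i _; rewrite mnmE ltnW.
have -> : (K ^ n = #|{ffun 'I_n -> 'I_K}|)%N by rewrite card_ffun !card_ord.
apply: (@leq_card _ _ (fun f => BMultinom (mdeg_lt f))) => f1 f2 /(congr1 val) /mnmP eq_f12.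
by apply/ffunP => i; apply: val_inj; have := eq_f12 i; rewrite !mnmE.
Qed.

Theorem nvar_leq_ngens (k : fieldType) n a (ps : seq ({mpoly k[n]} * nat)) :
  all (fun pe => 0 < pe.2)%N ps -> deg_bounded ps ->
  (forall l : 'I_n, in_ideal_deg ps a ('X_l ^+ a)) -> (n <= size ps)%N.
Proof.
move=> ps_pos ps_deg ideal_X; rewrite leqNgt; apply/negP => lt_ps_n.
have [K] := exists_pow_gt (a.+1 ^ n) lt_ps_n; apply/negP; rewrite -leqNgt.
apply: leq_trans (card_bmultinom_ge n K) _; rewrite -(dim_deg_space_top k).
apply: leq_trans (dim_deg_space_leq_iter_psum ps_pos ps_deg (leqnn _)) _.
exact: iter_psum_leq (fun D le_DN => quot_dim_leq ideal_X le_DN).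
Qed.

Section HomogeneousIdeals.
Variables (R : ringType) (n : nat).
Implicit Types (p : {mpoly R[n]}) (ps : seq ({mpoly R[n]} * nat)).

Lemma msize_dhomog e p : p \is e.-homog -> (msize p <= e.+1)%N.
Proof. by move=> /dhomogP hom_p; rewrite msizeE; apply/bigmax_leqP_seq => m /hom_p ->. Qed.

Lemma msize_mderiv p l : (msize p^`M(l) <= (msize p).-1)%N.
Proof.
rewrite [msize p^`M(l)]msizeE; apply/bigmax_leqP_seq => m + _.
rewrite mcoeff_msupp mcoeff_deriv => nz_m.
have : (m + U_(l))%MM \in msupp p.
  by rewrite mcoeff_msupp; apply: contraNneq nz_m => ->; rewrite mul0rn.
by move=> /msize_mdeg_lt; rewrite mdegD mdeg1 addn1; lia.
Qed.

Lemma sum_dhomog_select (I : finType) (u : I -> {mpoly R[n]}) (e : I -> nat) d :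
  (forall i, u i \is (e i).-homog) -> \sum_i u i \is d.-homog ->
  \sum_i u i = \sum_(i | e i == d) u i.
Proof.
move=> hom_u hom_sum.
rewrite -(pihomog_dE hom_sum) raddf_sum (bigID (fun i => e i == d)) /=.
rewrite [X in _ + X]big1 ?addr0 => [|i ne_eid]; last exact: pihomog_ne0 ne_eid (hom_u i).
by apply: eq_bigr => i /eqP eid; apply: pihomog_dE; rewrite -eid.
Qed.

Lemma in_ideal_deg0 ps a : in_ideal_deg ps a 0.
Proof. by exists [::]; rewrite big_nil. Qed.

Lemma in_ideal_degD ps ps' a p p' : in_ideal_deg ps a p -> in_ideal_deg ps' a p' ->
  in_ideal_deg (ps ++ ps') a (p + p').
Proof.
move=> [cs [-> cs_ok]] [cs' [-> cs'_ok]]; exists (cs ++ cs'); split; first by rewrite big_cat.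
by move=> ce; rewrite mem_cat => /orP[/cs_ok|/cs'_ok] [ps_ce le_ce]; rewrite mem_cat ps_ce ?orbT.
Qed.

Lemma in_ideal_degZ ps a c p : in_ideal_deg ps a p -> in_ideal_deg ps a (c *: p).
Proof.
move=> [cs [-> cs_ok]]; exists [seq (c *: ce.1, ce.2) | ce <- cs]; split.
  by rewrite big_map scaler_sumr; apply: eq_bigr => ce _; rewrite scalerAl.
move=> _ /mapP[ce /cs_ok[ps_ce le_ce] ->] /=; split=> //.
by apply: leq_trans le_ce; rewrite leq_add2r msizeZ_le.
Qed.
End HomogeneousIdeals.

Lemma in_ideal_mderivM (R : comRingType) n a (g h : {mpoly R[n]}) eg eh l :
  g \is eg.-homog -> h \is eh.-homog -> (eg + eh = a.+1)%N ->
  in_ideal_deg [:: (g, eg); (h, eh)] a (g * h)^`M(l).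
Proof.
move=> hom_g hom_h def_a; exists [:: (h^`M(l), (g, eg)); (g^`M(l), (h, eh))]; split.
  by rewrite !big_cons big_nil addr0 /= mderivM addrC mulrC.
have := msize_mderiv g l; have := msize_mderiv h l.
move: (msize_dhomog hom_g) (msize_dhomog hom_h) => le_g le_h le_dh le_dg.
by move=> ce; rewrite !inE => /orP[] /eqP -> /=; split; rewrite ?eqxx ?orbT //; lia.
Qed.

Lemma in_ideal_mderiv_sum (R : comRingType) n (I : eqType) (r : seq I)
    (g h : I -> {mpoly R[n]}) (eg eh : I -> nat) a l :
  (forall i, g i \is (eg i).-homog) -> (forall i, h i \is (eh i).-homog) ->
  {in r, forall i, eg i + eh i = a.+1}%N ->
  in_ideal_deg (flatten [seq [:: (g i, eg i); (h i, eh i)] | i <- r]) a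
    (\sum_(i <- r) g i * h i)^`M(l).
Proof.
move=> hom_g hom_h; elim: r => [|i r IHr] deg_ir.
  by rewrite big_nil raddf0; apply: in_ideal_deg0.
rewrite big_cons raddfD; apply: in_ideal_degD.
  by apply: in_ideal_mderivM; rewrite ?deg_ir ?mem_head.
by apply: IHr => j r_j; apply: deg_ir; rewrite inE r_j orbT.
Qed.

Lemma diag_form_homog (k : ringType) n d (a : 'I_n -> k) : diag_form d a \is d.-homog.
Proof.
apply: rpred_sum => i _; apply: dhomogZ.
by rewrite mpolyXn dhomogX /= mdegMn mdeg1 mul1n.
Qed.

Lemma mderiv_diag_form (k : ringType) n d (a : 'I_n -> k) l : (0 < d)%N ->
  (diag_form d a)^`M(l) = (a l * d%:R) *: 'X_l ^+ d.-1.
Proof.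
move=> d_gt0; rewrite raddf_sum (bigD1 l) //= big1 ?addr0 => [|i ne_il]; last first.
  by rewrite mderivZ mpolyXn mderivX mulmnE mnm1E (negbTE ne_il) mul0n scale0r scaler0.
rewrite mderivZ mpolyXn mderivX mulmnE mnm1E eqxx mul1n scalerA mpolyXn.
by congr (_ *: 'X_[_]); apply/mnmP => i; rewrite mnmBE !mulmnE mnm1E; case: eqP; lia.
Qed.

Lemma natf_neq0_pchar_ndvd (k : fieldType) d :
  (0 < d)%N -> (forall p, p \in [pchar k] -> ~~ (p %| d)%N) -> d%:R != 0 :> k.
Proof.
move=> d_gt0 pchar_ndvd; apply/negP => /eqP d0.
have [p pchar_p] := natf0_pchar d_gt0 (introT eqP d0).
by move: (pchar_ndvd p pchar_p); rewrite (dvdn_pcharf pchar_p) d0 eqxx.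
Qed.

Unset Implicit Arguments.
Theorem proposition3p3 (k : fieldType) (n d : nat) (a : 'I_n -> k)
    (hd : (0 < d)%N)
    (hchar : forall p : nat, p \in [pchar k] -> ~~ (p %| d)%N)
    (ha : forall i, a i != 0) :
  forall s : nat, str_decomp d (diag_form d a) s -> (n <= 2 * s)%N.
Proof.
move=> s [g [h [/fin_all_exists[eg deg_g] [/fin_all_exists[eh deg_h] def_f]]]].
pose kept := [pred i | eg i + eh i == d]%N.
pose ps := flatten [seq [:: (g i, eg i); (h i, eh i)] | i <- enum kept].
have size_ps : size ps = (2 * #|kept|)%N.
  by rewrite cardE /ps; elim: (enum kept) => //= i r ->; rewrite mulnS.
have kept_f : diag_form d a = \sum_(i <- enum kept) g i * h i.
  rewrite big_enum def_f; apply: sum_dhomog_select => [i|].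
    exact: dhomogM (deg_g i).2 (deg_h i).2.
  by rewrite -def_f diag_form_homog.
apply: leq_trans (@nvar_leq_ngens k n d.-1 ps _ _ _) _.
- apply/allP => -[p e] /flatten_mapP[i]; rewrite mem_enum inE => /eqP kept_i.
  by rewrite !inE => /orP[] /eqP[_ ->] /=; move: (deg_g i).1 (deg_h i).1; lia.
- apply/allP => -[p e] /flatten_mapP[i _].
  rewrite !inE => /orP[] /eqP[-> ->]; apply: msize_dhomog.
  + exact: (deg_g i).2.
  + exact: (deg_h i).2.
- move=> l; have -> : 'X_l ^+ d.-1 = (a l * d%:R)^-1 *: (diag_form d a)^`M(l).
    by rewrite mderiv_diag_form // scalerA mulVf ?scale1r // mulf_neq0 ?ha ?natf_neq0_pchar_ndvd.
  rewrite kept_f; apply/in_ideal_degZ/in_ideal_mderiv_sum => [i|i|i].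
  + exact: (deg_g i).2.
  + exact: (deg_h i).2.
  + by rewrite mem_enum => /eqP ->; lia.
- by rewrite size_ps leq_mul2l (leq_trans (max_card _)) ?card_ord ?orbT.
Qed.
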